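(* Let $G=(V,E)$ be a graph, $k\ge1$ an integer, and let $G_k$ be obtained from $G$ by performing a $k$-comb operation at every vertex of $G$. Let $p(k,u,x)=(1+x)^k(xu^2+1)-xu^2$. Then $$P(G_k;u,x)=p(k,u,x)^{|V|}\,P\big(G;u,\,x/p(k,u,x)\big)$$ (as an identity of rational functions; the right-hand side is a polynomial).
   Context: Graphs are finite, undirected, without multiple edges, self loops allowed; $G[A]$ is the induced subgraph on $A$, and $rk(G)$ is the $\mathbb{F}_2$-rank of the adjacency matrix ($m_{ij}=1$ iff $\{i,j\}\in E$, diagonal entry $1$ iff self loop; empty graph rank $0$). $P(G;u,x)=\sum_{A\subseteq V}x^{|A|}u^{rk(G[A])}$, with $0^0=1$. The $k$-comb of $G$ at a vertex $a$ is the graph $(V\cup\{a_1,\dots,a_k\},\,E\cup\{\{a,a_1\},\dots,\{a,a_k\}\})$ with $a_1,\dots,a_k$ new vertices (no self loops). $G_k$ is obtained by adding such a $k$-comb (with fresh new vertices) at each original vertex $a\in V$. *)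

From HB Require Import structures.
From mathcomp Require Import all_boot all_order all_algebra.
Set Implicit Arguments. Unset Strict Implicit. Unset Printing Implicit Defensive.
Import GRing.Theory.
Local Open Scope ring_scope.

(* A graph is a finite vertex type V with a symmetric edge relation e : rel V;
   e x x = true encodes a self loop at x. *)

Definition adjmx (V : finType) (e : rel V) : 'M['F_2]_#|V| :=
  \matrix_(i, j) ((e (enum_val i) (enum_val j) : nat)%:R).

Definition rk (V : finType) (e : rel V) : nat := \rank (adjmx e).

Definition induced (V : finType) (e : rel V) (A : {set V}) :
  rel {v : V | v \in A} := fun a b => e (val a) (val b).

Definition Ppoly (R : comNzRingType) (V : finType) (e : rel V) (u t : R) : R :=
  \sum_(A : {set V}) t ^+ #|A| * u ^+ rk (@induced V e A).

(* G_k: at every vertex a add k new pendant vertices (a,i), i < k,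
   each joined to a only (no self loops). *)
Definition comb_all (V : finType) (e : rel V) (k : nat) :
  rel (V + (V * 'I_k))%type :=
  fun a b => match a, b with
  | inl x, inl y => e x y
  | inl x, inr (y, _) => x == y
  | inr (x, _), inl y => x == y
  | inr _, inr _ => false
  end.

Definition pk (R : comNzRingType) (k : nat) (u x : R) : R :=
  (1 + x) ^+ k * (x * u ^+ 2 + 1) - x * u ^+ 2.

From Corelib Require Import Setoid.
From HB Require Import structures.
From mathcomp Require Import all_boot all_order all_algebra ring.
Set Implicit Arguments. Unset Strict Implicit. Unset Printing Implicit Defensive.
Import GRing.Theory.
Local Open Scope ring_scope.

(* A subset B of the vertices of G_k is encoded by a configuration, giving for
   every vertex a of G whether a is in B and which of its k teeth are in B.  A Schur complement shows that deleting a pendant vertex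
   together with its neighbour lowers the rank by 2, while isolated vertices do
   not count.  Since teeth are pendant vertices, rk(G_k[B]) = rk(G[C]) + 2|D|,
   where D ("hubs") are the vertices of B with a tooth in B and C ("core") those
   with none (rank_chosen).
   Counting: the monomial x^|B| u^(2|D|) is a product of local weights over the
   vertices of G (weight_chosen).  Summing the local weight over the states of a
   vertex gives x if the vertex is required to be in the core and p otherwise
   (sum_core_weight), so grouping configurations by their core C gives
   P(G_k; u, x) = sum_C x^|C| p^(|V|-|C|) u^rk(G[C]) (Ppoly_comb_sets); the
   theorem follows by rescaling x by p. *)

Lemma rank_mxsub (F : fieldType) m n (f g : 'I_m -> 'I_n) (A : 'M[F]_n) :
  (\rank (mxsub f g A) <= \rank A)%N.
Proof.
have -> : mxsub f g A = rowsub f 1%:M *m (A *m colsub g 1%:M).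
  by rewrite mulmx_colsub mulmx1 -rowsubE; apply/matrixP=> i j; rewrite !mxE.
exact: leq_trans (mxrankM_maxr _ _) (mxrankM_maxl _ _).
Qed.

Lemma rank_block_pivot (F : fieldType) m n (A A' : 'M[F]_m) (B : 'M_(m, n))
    (C : 'M_(n, m)) (D : 'M_n) :
  A *m A' = 1%:M -> \rank (block_mx A B C D) = (m + \rank (D - C *m A' *m B)%R)%N.
Proof.
move=> AA'; have A'A := mulmx1C AA'.
set L := block_mx 1%:M 0 (C *m A') 1%:M; set U := block_mx 1%:M (A' *m B) 0 1%:M.
have -> : block_mx A B C D = L *m block_mx A 0 0 (D - C *m A' *m B) *m U.
  rewrite !mulmx_block !mul1mx !mul0mx !mulmx0 !mulmx1 !addr0 !add0r.
  by rewrite -!mulmxA A'A mulmx1 mulmxA AA' mul1mx addrC subrK.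
have L_unit : L \in unitmx by rewrite unitmxE det_lblock !det1 mulr1 unitr1.
have U_unit : U \in unitmx by rewrite unitmxE det_ublock !det1 mulr1 unitr1.
rewrite mxrankMfree ?row_free_unit // eqmxMfull ?row_full_unit //.
rewrite rank_diag_block_mx mxrank_unit //.
by case/mulmx1_unit: AA'.
Qed.

Section Gram.
Variables (T : finType) (r : rel T).

Definition gram_mx n (phi : 'I_n -> T) : 'M['F_2]_n :=
  \matrix_(i, j) ((r (phi i) (phi j) : nat)%:R).

Definition gram_rank n (phi : 'I_n -> T) : nat := \rank (gram_mx phi).

(* If every vertex listed by phi is listed by psi, the Gram matrix along phi
   is a submatrix of the one along psi. *)
Lemma gram_rank_le m n (phi : 'I_m -> T) (psi : 'I_n -> T) :
  (forall i, exists j, psi j = phi i) -> (gram_rank phi <= gram_rank psi)%N.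
Proof.
move=> sub_phi; have sub_phi' i : exists j, psi j == phi i.
  by have [j <-] := sub_phi i; exists j.
pose f i := xchoose (sub_phi' i).
rewrite /gram_rank; have -> : gram_mx phi = mxsub f f (gram_mx psi).
  by apply/matrixP=> i j; rewrite !mxE !(eqP (xchooseP (sub_phi' _))).
exact: rank_mxsub.
Qed.

Lemma gram_rank_eq m n (phi : 'I_m -> T) (psi : 'I_n -> T) :
  (forall y, (exists i, phi i = y) <-> (exists j, psi j = y)) ->
  gram_rank phi = gram_rank psi.
Proof.
move=> same_img; apply/eqP; rewrite eqn_leq !gram_rank_le // => i.
  by apply/same_img; exists i.
by apply/same_img; exists i.
Qed.

Definition enum_fun (S : {set T}) : 'I_#|S| -> T := fun i => enum_val i.
Arguments enum_fun : clear implicits.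

Lemma enum_funP (S : {set T}) y : reflect (exists i, enum_fun S i = y) (y \in S).
Proof.
apply: (iffP idP) => [yS|[i <-]]; last exact: enum_valP.
by exists (enum_rank_in yS y); rewrite /enum_fun enum_rankK_in.
Qed.

Definition srank (S : {set T}) : nat := gram_rank (enum_fun S).

Lemma rk_induced (S : {set T}) : rk (@induced _ r S) = srank S.
Proof.
apply: (@gram_rank_eq _ _ (fun i => val (enum_val i))) => y.
split=> [[i <-]|/enum_funP yS]; first exact/enum_funP/valP.
by exists (enum_rank (Sub y yS : {v | v \in S})); rewrite enum_rankK.
Qed.

End Gram.
Arguments enum_fun {T} S.

Lemma srank_map (T T' : finType) (r : rel T) (r' : rel T') (h : T -> T')
    (S : {set T}) :
  (forall x y, r' (h x) (h y) = r x y) -> srank r' (h @: S) = srank r S.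
Proof.
move=> hr; rewrite /srank (@gram_rank_eq _ _ _ _ _ (h \o enum_fun S)).
  by rewrite /gram_rank; congr (\rank _); apply/matrixP=> i j; rewrite !mxE /= hr.
move=> y; split=> [/enum_funP/imsetP[x /enum_funP[j <-] ->]|[j <-]].
  by exists j.
exact/enum_funP/imset_f/enum_valP.
Qed.

Section Blocks.
Variables (T : finType) (r : rel T).
Hypothesis r_sym : symmetric r.

Definition cat_fun m n (al : 'I_m -> T) (ps : 'I_n -> T) : 'I_(m + n) -> T :=
  fun i => match split i with inl j => al j | inr j => ps j end.

Lemma cat_funP m n (al : 'I_m -> T) (ps : 'I_n -> T) y :
  (exists i, cat_fun al ps i = y) <-> (exists i, al i = y) \/ (exists j, ps j = y).
Proof.
rewrite /cat_fun; split=> [[i]|[[i <-]|[j <-]]].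
- by case: (split i) => j <-; [left|right]; exists j.
- by exists (lshift n i); rewrite (unsplitK (inl i)).
- by exists (rshift m j); rewrite (unsplitK (inr j)).
Qed.

Definition cross_mx m n (al : 'I_m -> T) (ps : 'I_n -> T) : 'M['F_2]_(m, n) :=
  \matrix_(i, j) ((r (al i) (ps j) : nat)%:R).

Lemma gram_mx_cat m n (al : 'I_m -> T) (ps : 'I_n -> T) :
  gram_mx r (cat_fun al ps) =
  block_mx (gram_mx r al) (cross_mx al ps) (cross_mx ps al) (gram_mx r ps).
Proof.
rewrite -[gram_mx r _]submxK; congr block_mx; apply/matrixP=> i j;
  by rewrite !mxE /cat_fun ?(unsplitK (inl _)) ?(unsplitK (inr _)).
Qed.

Lemma gram_rank_isolated m n (al : 'I_m -> T) (ps : 'I_n -> T) :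
  (forall i j, r (al i) (al j) = false) -> (forall i j, r (al i) (ps j) = false) ->
  gram_rank r (cat_fun al ps) = gram_rank r ps.
Proof.
move=> al_al al_ps; rewrite /gram_rank gram_mx_cat.
have -> : gram_mx r al = 0 by apply/matrixP=> i j; rewrite !mxE al_al.
have -> : cross_mx al ps = 0 by apply/matrixP=> i j; rewrite !mxE al_ps.
have -> : cross_mx ps al = 0 by apply/matrixP=> i j; rewrite !mxE r_sym al_ps.
by rewrite rank_diag_block_mx mxrank0.
Qed.

Definition pair_fun (a p : T) : 'I_2 -> T := fun i => if val i == 0%N then a else p.

(* A pendant vertex p together with its unique neighbour a contributes exactly 2
   to the rank: the Gram block of [a; p] is invertible, and its Schur complement
   is the Gram matrix of the remaining vertices. *)
Lemma gram_rank_pendant n (a p : T) (ps : 'I_n -> T) :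
  (forall y, r p y = (y == a)) -> p != a -> (forall j, ps j != a) ->
  gram_rank r (cat_fun (pair_fun a p) ps) = (gram_rank r ps).+2.
Proof.
move=> p_pend p_a ps_a.
have r_p_ps j : r p (ps j) = false by rewrite p_pend (negbTE (ps_a j)).
have r_a_p : r a p by rewrite r_sym p_pend.
(* The Gram block of [a; p] is [[r a a, 1], [1, 0]], with inverse A'. *)
pose A' : 'M['F_2]_2 := \matrix_(i, j)
  if val i == 0%N then (val j != 0%N)%:R else (val j == 0%N)%:R - (r a a)%:R *+ (val j != 0%N).
have AA' : gram_mx r (pair_fun a p) *m A' = 1%:M.
  apply/matrixP=> i j; rewrite !(mxE, big_ord_recl, big_ord0) /pair_fun /=.
  case: i => [[|[|i]] Hi] //=; case: j => [[|[|j]] Hj] //=;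
    rewrite ?p_pend ?eqxx ?(negbTE p_a) ?r_a_p /=;
    by rewrite ?(mulr0, mul0r, mulr1, mul1r, mulr0n, mulr1n, addr0, add0r, subr0, subrr).
rewrite /gram_rank gram_mx_cat (rank_block_pivot _ _ _ AA').
suff -> : cross_mx ps (pair_fun a p) *m A' *m cross_mx (pair_fun a p) ps = 0.
  by rewrite subr0.
apply/matrixP=> i j; rewrite !(mxE, big_ord_recl, big_ord0) /pair_fun /=.
by rewrite r_p_ps [r (ps i) p]r_sym r_p_ps !(mulr0, mul0r, addr0).
Qed.

Lemma srank_cat (S A : {set T}) m (al : 'I_m -> T) :
  A \subset S -> (forall y, (exists i, al i = y) <-> y \in A) ->
  srank r S = gram_rank r (cat_fun al (enum_fun (S :\: A))).
Proof.
move=> AS al_A; apply: gram_rank_eq => y.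
rewrite cat_funP al_A (rwP (enum_funP S y)) (rwP (enum_funP (S :\: A) y)) inE.
split=> [yS|[/(subsetP AS)//|/andP[]//]].
by case: (boolP (y \in A)); [left|right; apply/andP].
Qed.

Lemma srank_isolated (S Z : {set T}) :
  Z \subset S -> (forall z y, z \in Z -> y \in S -> r z y = false) ->
  srank r S = srank r (S :\: Z).
Proof.
move=> ZS Z_iso; rewrite (@srank_cat S Z _ (enum_fun Z)) //; last first.
  by move=> y; rewrite (rwP (enum_funP Z y)).
apply: gram_rank_isolated => i j; apply: Z_iso; try exact: enum_valP.
  exact/(subsetP ZS)/enum_valP.
by have := enum_valP j; rewrite inE => /andP[].
Qed.

Lemma pair_funP (a p y : T) : reflect (exists i, pair_fun a p i = y) (y \in [set a; p]).
Proof.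
apply: (iffP set2P) => [[->|->]|[i <-]]; first by exists ord0.
  by exists ord_max.
by rewrite /pair_fun; case: ifP; [left|right].
Qed.

Lemma srank_pendant (S : {set T}) (a p : T) :
  a \in S -> p \in S -> p != a -> (forall y, r p y = (y == a)) ->
  srank r S = (srank r (S :\: [set a; p])).+2.
Proof.
move=> aS pS p_a p_pend.
rewrite (@srank_cat S [set a; p] _ (pair_fun a p)); last first.
- by move=> y; rewrite (rwP (pair_funP a p y)).
- by apply/subsetP=> y /set2P[]->.
apply: gram_rank_pendant => // j; have := enum_valP j.
by rewrite !inE negb_or => /andP[/andP[]].
Qed.
End Blocks.

Section StripPendants.
Variables (T : finType) (r : rel T) (Q : {set T}) (hub : T -> T).
Hypothesis r_sym : symmetric r.
Hypothesis Q_pendant : forall q y, q \in Q -> r q y = (y == hub q).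
Hypothesis hub_notin_Q : forall q, q \in Q -> hub q \notin Q.

Definition matched (S : {set T}) : {set T} :=
  [set y in S | [exists q, [&& q \in S, q \in Q & hub q == y]]].

Lemma matchedP (S : {set T}) y :
  reflect (y \in S /\ exists2 q, q \in S :&: Q & hub q = y) (y \in matched S).
Proof.
rewrite inE; apply: (iffP andP) => [[yS /existsP[q /and3P[qS qQ /eqP]]]|].
  by split=> //; exists q; rewrite // inE qS.
case=> yS [q /setIP[qS qQ] hq]; split=> //; apply/existsP; exists q.
by rewrite qS qQ hq eqxx.
Qed.

Lemma matched_remove (S : {set T}) d q0 :
  q0 \in S -> q0 \in Q -> hub q0 = d ->
  matched (S :\: [set d; q0]) = matched S :\ d.
Proof.
move=> q0S q0Q hq0; apply/setP=> y; rewrite in_setD1.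
apply/matchedP/andP => [[/setDP[yS y_dq0] [q qS' hq]]|].
  split; first by apply: contraNneq y_dq0 => ->; rewrite set21.
  apply/matchedP; split=> //; exists q => //.
  by move: qS'; rewrite !inE => /andP[/andP[_ ->]].
case=> yd /matchedP[yS [q /setIP[qS qQ] hq]].
have q_d : q != d by apply: contraNneq (hub_notin_Q q0Q) => qd; rewrite hq0 -qd.
have y_q0 : y != q0 by apply: contraNneq (hub_notin_Q qQ) => yq0; rewrite hq yq0.
have q_q0 : q != q0 by apply: contraNneq yd => qq0; rewrite -hq qq0 hq0.
split; first by rewrite !inE negb_or yd y_q0 yS.
by exists q; rewrite // !inE negb_or q_d q_q0 qS qQ.
Qed.

(* Every pendant vertex of S whose hub is in S can be removed together with its
   hub (rank -2); the remaining pendant vertices of S are then isolated. *)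
Lemma srank_strip_pendants (S : {set T}) :
  srank r S = (srank r (S :\: (matched S :|: Q)) + 2 * #|matched S|)%N.
Proof.
move Hn: #|matched S| => n; elim: n S Hn => [|n IH] S Hn.
  have M0 : matched S = set0 by apply/eqP; rewrite -cards_eq0 Hn.
  rewrite M0 set0U muln0 addn0 (@srank_isolated _ _ r_sym S (S :&: Q)) ?subsetIl //.
    by rewrite setDIr setDv set0U.
  move=> z y /setIP[zS zQ] yS; rewrite Q_pendant //; apply/negbTE/eqP => yz.
  have : y \in matched S by apply/matchedP; split=> //; exists z; rewrite ?inE ?zS.
  by rewrite M0 inE.
have /card_gt0P[d dM] : (0 < #|matched S|)%N by rewrite Hn.
have /matchedP[dS [q0 /setIP[q0S q0Q] hq0]] := dM.
have q0_d : q0 != d by apply: contraNneq (hub_notin_Q q0Q) => q0d; rewrite hq0 -q0d.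
rewrite (srank_pendant r_sym dS q0S q0_d); last by move=> y; rewrite Q_pendant // hq0.
rewrite IH matched_remove //; last by move: Hn; rewrite (cardsD1 d) dM => -[].
suff -> : S :\: [set d; q0] :\: (matched S :\ d :|: Q) = S :\: (matched S :|: Q).
  by rewrite mulnS addnCA.
apply/setP=> y; rewrite !(in_setD, in_setU, in_setD1, in_set1).
case: (eqVneq y d) => [->|_] /=; first by rewrite dM andbF.
by case: (eqVneq y q0) => [->|_] /=; rewrite ?q0Q ?orbT.
Qed.
End StripPendants.

(* For a vertex a of G, a local state records whether a is chosen and which of
   its k teeth are chosen; a configuration gives a state for every vertex. *)
Notation state k := (bool * {ffun 'I_k -> bool})%type.
Notation config V k := {ffun V -> state k}.

Section CombRank.
Variables (V : finType) (e : rel V) (k : nat).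
Hypothesis e_sym : symmetric e.
Local Notation T := (V + V * 'I_k)%type.
Local Notation G_k := (@comb_all V e k).

Lemma comb_sym : symmetric G_k.
Proof. by case=> [a|[a i]] [b|[b j]] //=; rewrite ?e_sym // eq_sym. Qed.

Definition teeth : {set T} := [set v : T | if v is inr _ then true else false].

Definition hub (v : T) : T := match v with inl a => inl a | inr (a, _) => inl a end.

Lemma teeth_pendant q y : q \in teeth -> G_k q y = (y == hub q).
Proof. by rewrite inE; case: q => [//|[a i]] _; case: y => [b|[b j]] //=; rewrite eq_sym. Qed.

Lemma hub_notin_teeth q : hub q \notin teeth.
Proof. by case: q => [a|[a i]]; rewrite inE. Qed.

Definition chosen (f : config V k) : {set T} :=
  [set v : T | match v with inl a => (f a).1 | inr (a, i) => (f a).2 i end].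

Definition hubs (f : config V k) : {set V} := [set a | (f a).1 && [exists i, (f a).2 i]].
Definition core (f : config V k) : {set V} := [set a | (f a).1 && ~~ [exists i, (f a).2 i]].

Lemma matched_chosen (f : config V k) : matched teeth hub (chosen f) = inl @: hubs f.
Proof.
apply/setP=> v; apply/matchedP/imsetP => [[vS [q /setIP[qS qQ] hq]]|[a]].
  subst v; case: q vS qS qQ => [b|[a i]] vS qS; rewrite inE // => _; exists a => //.
  by move: vS qS; rewrite !inE /= => -> fai; apply/existsP; exists i.
rewrite inE => /andP[fa1 /existsP[i fai]] ->; split; first by rewrite inE.
by exists (inr (a, i)); rewrite ?inE /= ?fai.
Qed.

Lemma chosen_rest (f : config V k) :
  chosen f :\: (inl @: hubs f :|: teeth) = inl @: core f.
Proof.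
apply/setP=> -[a|[a i]]; rewrite !in_setD !in_setU.
  by rewrite !(mem_imset _ _ inl_inj) !inE /=; case: (f a).1; case: [exists i, _].
rewrite [_ \in teeth]inE /= orbT /=; apply/esym/negP => /imsetP[? _ //].
Qed.

Lemma rank_chosen (f : config V k) :
  rk (@induced _ G_k (chosen f)) = (rk (@induced _ e (core f)) + 2 * #|hubs f|)%N.
Proof.
rewrite !rk_induced (srank_strip_pendants comb_sym teeth_pendant)
  => [|q _]; last exact: hub_notin_teeth.
by rewrite matched_chosen chosen_rest (@srank_map _ _ e) // (card_imset _ inl_inj).
Qed.

Lemma chosen_bij : bijective chosen.
Proof.
exists (fun B : {set T} => [ffun a => (inl a \in B, [ffun i => inr (a, i) \in B])]).
  move=> f; apply/ffunP=> a; rewrite ffunE inE /=.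
  by case E: (f a) => [b g]; congr pair; apply/ffunP=> i; rewrite ffunE inE /= E.
by move=> B; apply/setP=> -[a|[a i]]; rewrite inE ffunE //= ffunE.
Qed.

End CombRank.

Section Weights.
Variables (R : comNzRingType) (k : nat) (u x : R).

Definition teeth_weight (g : {ffun 'I_k -> bool}) : R := \prod_i (if g i then x else 1).

Definition state_weight (s : state k) : R :=
  (if s.1 then x else 1) * teeth_weight s.2 *
  (if s.1 && [exists i, s.2 i] then u ^+ 2 else 1).

Definition core_state : state k := (true, [ffun => false]).

Lemma exists_teeth (g : {ffun 'I_k -> bool}) : [exists i, g i] = (g != [ffun => false]).
Proof.
apply/existsP/idP => [[i gi]|g_nz]; first by apply: contraTneq gi => ->; rewrite ffunE.
apply/existsP; apply: contraNT g_nz => /existsPn g0; apply/eqP/ffunP => i.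
by rewrite ffunE; apply/negbTE.
Qed.

Lemma teeth_weight_none : teeth_weight [ffun => false] = 1.
Proof. by rewrite /teeth_weight big1 // => i _; rewrite ffunE. Qed.

Lemma state_weight_core : state_weight core_state = x.
Proof. by rewrite /state_weight /= exists_teeth eqxx teeth_weight_none !mulr1. Qed.

Lemma sum_teeth_weight : \sum_g teeth_weight g = (1 + x) ^+ k.
Proof.
rewrite -(bigA_distr_bigA (fun (i : 'I_k) (b : bool) => if b then x else 1)) /=.
rewrite (eq_bigr (fun _ => 1 + x)); last by move=> i _; rewrite big_bool /= addrC.
by rewrite prodr_const card_ord.
Qed.

Lemma sum_state_weight : \sum_s state_weight s = x + pk k u x.
Proof.
rewrite -(pair_bigA _ (fun b g => state_weight (b, g))) big_bool /= /state_weight /=.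
rewrite addrC (eq_bigr teeth_weight) => [|g _]; last by rewrite mul1r mulr1.
rewrite sum_teeth_weight (bigD1 [ffun => false]) //= exists_teeth eqxx.
under eq_bigr => g g_nz do rewrite exists_teeth g_nz mulrAC.
rewrite -mulr_sumr teeth_weight_none /=.
have -> : \sum_(g | g != [ffun => false]) teeth_weight g = (1 + x) ^+ k - 1.
  rewrite -sum_teeth_weight [in RHS](bigD1 [ffun => false]) //=.
  by rewrite teeth_weight_none addrC addrK.
by rewrite /pk; ring.
Qed.

End Weights.

Section CombPolynomial.
Variables (R : comNzRingType) (V : finType) (e : rel V) (k : nat) (u x : R).
Hypothesis e_sym : symmetric e.

Lemma in_core (f : config V k) a : (a \in core f) = (f a == core_state k).
Proof.
by rewrite inE /core_state; case: (f a) => b g /=; rewrite xpair_eqE exists_teeth negbK eqb_id.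
Qed.

Lemma weight_chosen (f : config V k) :
  x ^+ #|chosen f| * u ^+ (2 * #|hubs f|) = \prod_a state_weight u x (f a).
Proof.
rewrite exprM -[x ^+ _]prodr_const -[_ ^+ #|hubs f|]prodr_const.
rewrite /state_weight [RHS]big_split [in RHS]big_split /=.
rewrite !big_mkcond /= big_sumType /= /teeth_weight pair_bigA.
rewrite [\prod_(a in hubs f) _]big_mkcond.
congr (_ * _ * _).
- by apply: eq_bigr => a _; rewrite inE.
- by apply: eq_bigr => -[a i] _; rewrite inE.
- by apply: eq_bigr => a _; rewrite inE.
Qed.

Lemma Ppoly_comb_config :
  Ppoly (@comb_all V e k) u x =
  \sum_(f : config V k) (\prod_a state_weight u x (f a)) * u ^+ rk (@induced _ e (core f)).
Proof.
rewrite /Ppoly (reindex (@chosen V k)) /=; last exact/onW_bij/chosen_bij.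
apply: eq_bigr => f _; rewrite rank_chosen // exprD.
by rewrite [u ^+ rk _ * _]mulrC mulrA weight_chosen.
Qed.

(* The weight of the local state s at a, restricted to the configurations
   whose core is C. *)
Definition core_weight (C : {set V}) a (s : state k) : R :=
  ((a \in C) == (s == core_state k))%:R * state_weight u x s.

Lemma prod_core_weight (C : {set V}) (f : config V k) :
  \prod_a core_weight C a (f a) = (C == core f)%:R * \prod_a state_weight u x (f a).
Proof.
rewrite big_split /=; congr (_ * _); case: eqP => [->|C_f].
  by rewrite big1 // => a _; rewrite in_core eqxx.
have /existsP[a Ca] : [exists a, (a \in C) != (a \in core f)].
  apply: contraT => /existsPn C_core; exfalso; apply: C_f.
  by apply/setP=> a; apply/eqP/negPn/C_core.
by rewrite (bigD1 a) //= -in_core (negbTE Ca) mul0r.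
Qed.

Lemma sum_core_weight (C : {set V}) a :
  \sum_s core_weight C a s = if a \in C then x else pk k u x.
Proof.
rewrite /core_weight (bigD1 (core_state k)) //= eqxx.
case: (a \in C) => /=.
  by rewrite mul1r state_weight_core big1 ?addr0 // => s /negbTE ->; rewrite mul0r.
rewrite mul0r add0r -[pk k u x](addKr x) -sum_state_weight.
rewrite [in RHS](bigD1 (core_state k)) //= state_weight_core addKr.
by apply: eq_bigr => s /negbTE ->; rewrite mul1r.
Qed.

Lemma Ppoly_comb_sets :
  Ppoly (@comb_all V e k) u x =
  \sum_(C : {set V}) x ^+ #|C| * pk k u x ^+ (#|V| - #|C|) * u ^+ rk (@induced _ e C).
Proof.
rewrite Ppoly_comb_config.
transitivity (\sum_(f : config V k) \sum_(C : {set V})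
    (\prod_a core_weight C a (f a)) * u ^+ rk (@induced _ e C)).
  apply: eq_bigr => f _; rewrite (bigD1 (core f)) //= prod_core_weight eqxx mul1r.
  by rewrite [X in _ + X]big1 ?addr0 // => C /negbTE C_f; rewrite prod_core_weight C_f !mul0r.
rewrite exchange_big; apply: eq_bigr => C _ /=.
rewrite -mulr_suml -(bigA_distr_bigA (core_weight C)) /=.
under eq_bigr do rewrite sum_core_weight.
rewrite (bigID (mem C)) /= (eq_bigr (fun _ => x)) => [|a ->] //.
rewrite [\prod_(a | a \notin C) _](eq_bigr (fun _ => pk k u x)) => [|a /negbTE ->] //.
by rewrite !prodr_const -(cardC (mem C)) addKn.
Qed.
End CombPolynomial.

Lemma expr_rescale (F : fieldType) (p y : F) (n c : nat) :
  p != 0 -> (c <= n)%N -> y ^+ c * p ^+ (n - c) = p ^+ n * (y / p) ^+ c.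
Proof.
move=> p_nz c_n; rewrite -{2}(subnK c_n) exprD expr_div_n.
by field; rewrite expf_neq0.
Qed.

Theorem mainTheorem6 (R : fieldType) (V : finType) (e : rel V) (k : nat)
  (he : symmetric e) (hk : (0 < k)%N) (u x : R) (hp : pk k u x != 0) :
  Ppoly (@comb_all V e k) u x = pk k u x ^+ #|V| * Ppoly e u (x / pk k u x).
Proof.
rewrite Ppoly_comb_sets // /Ppoly mulr_sumr; apply: eq_bigr => C _.
by rewrite mulrA expr_rescale // max_card.
Qed.
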